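(* For any probability measure $G$ on $[0,\infty)$ there exists $\theta>0$ such that for all $x_1,x_2,y_1,y_2\in\mathbb Z$, with $T=T((x_1,y_1),(x_2,y_2))$, we have $\mathbb E[e^{\theta T}]<\infty$.
   Context: Model: In $\mathbb Z^2$, every vertical edge receives the deterministic weight $1$ and every horizontal edge (joining $(x,y)$ and $(x+1,y)$) receives a random weight, independently with law $G$. The passage time of a nearest-neighbour path is the sum of the weights of its edges, and $T(u,w)$ is the infimum of passage times over paths from $u$ to $w$. *)

From HB Require Import structures.
From mathcomp Require Import all_boot all_order all_algebra.
From mathcomp Require Import all_classical all_reals all_analysis.
Set Implicit Arguments. Unset Strict Implicit. Unset Printing Implicit Defensive.
Import Order.TTheory GRing.Theory Num.Theory.
Import numFieldNormedType.Exports.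
Local Open Scope classical_set_scope.
Local Open Scope ring_scope.

Definition vertex := (int * int)%type.

Definition adj : rel vertex := fun a b =>
  ((a.1 == b.1) && (`|a.2 - b.2| == 1%N)) || ((a.2 == b.2) && (`|a.1 - b.1| == 1%N)).

(* Weight of the edge {a,b} (a, b adjacent): vertical edges have weight 1,
   the horizontal edge joining (x,y) and (x+1,y) has weight w (x,y),
   i.e. horizontal edges are indexed by their left endpoint. *)
Definition edge_weight (R : realType) (w : vertex -> R) (a b : vertex) : R :=
  if a.1 == b.1 then 1 else w (Order.min a.1 b.1, a.2).

Definition nn_path (u v : vertex) (s : seq vertex) : bool :=
  path adj u s && (last u s == v).

Definition passage_time (R : realType) (w : vertex -> R) (u : vertex)
  (s : seq vertex) : R :=
  \sum_(e <- zip (u :: s) s) edge_weight w e.1 e.2.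

Definition fpp_time (R : realType) (w : vertex -> R) (u v : vertex) : R :=
  inf [set passage_time w u s | s in [set s | nn_path u v s]].

Definition mutually_independent (d : measure_display) (Omega : measurableType d)
  (R : realType) (P : probability Omega R) (I : eqType) (X : I -> Omega -> R) :=
  forall (J : seq I) (A : I -> set R),
    uniq J -> (forall i, measurable (A i)) ->
    P (\big[setI/setT]_(i <- J) (X i @^-1` A i)) =
    (\prod_(i <- J) P (X i @^-1` A i))%E.

(* Climb k rows from (x1, y1), cross to x2 along row y1 + k, then move vertically
   to (x2, y2): if all n = |x2 - x1| horizontal edges of that row weigh at most a,
   this path shows T <= 2k + |y2 - y1| + n a.  Choose a with n G(a, oo) <= 1/4: a
   row then fails with probability at most 1/4 by a union bound, and distinct rows
   use disjoint edges, so by independence the first k rows all fail with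
   probability at most 4^-k.  Hence, with theta = ln 2 / 2 and K the first good
   row, exp(theta T) <= C 2^K and E[exp(theta T)] <= C sum_k 2^k 4^-k < oo. *)

From HB Require Import structures.
From mathcomp Require Import all_boot all_order all_algebra.
From mathcomp Require Import all_classical all_reals all_analysis.
From mathcomp Require Import measurable_realfun.
From mathcomp Require Import zify ring lra.
Import Order.TTheory GRing.Theory Num.Theory.
Import numFieldNormedType.Exports.
Local Open Scope classical_set_scope.
Local Open Scope ring_scope.
Set Implicit Arguments. Unset Strict Implicit. Unset Printing Implicit Defensive.

Section Paths.
Variables (R : realType) (w : vertex -> R).

Definition reach (u v : vertex) (c : R) :=
  exists2 s, nn_path u v s & passage_time w u s <= c.

Lemma adjC : symmetric adj.
Proof. by move=> [a1 a2] [b1 b2]; rewrite /adj /=; apply/idP/idP; lia. Qed.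

Lemma edge_weightC a b : adj a b -> edge_weight w a b = edge_weight w b a.
Proof.
move: a b => [a1 a2] [b1 b2]; rewrite /adj /edge_weight /= [b1 == a1]eq_sym minC.
by case: eqP => // ne /orP[/andP[/eqP e _]|/andP[/eqP -> _]].
Qed.

Lemma passage_time_nil u : passage_time w u [::] = 0.
Proof. by rewrite /passage_time big_nil. Qed.

Lemma passage_time_cons u v s :
  passage_time w u (v :: s) = edge_weight w u v + passage_time w v s.
Proof. by rewrite /passage_time /= big_cons. Qed.

Lemma passage_time_cat u s1 s2 :
  passage_time w u (s1 ++ s2) =
  passage_time w u s1 + passage_time w (last u s1) s2.
Proof.
elim: s1 u => [|v s1 IH] u; first by rewrite passage_time_nil add0r.
by rewrite cat_cons !passage_time_cons IH addrA.
Qed.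

Lemma reach_refl u : reach u u 0.
Proof. by exists [::]; rewrite /nn_path ?passage_time_nil /= ?eqxx. Qed.

Lemma reach_edge u v : adj u v -> reach u v (edge_weight w u v).
Proof.
by move=> uv; exists [:: v]; rewrite /nn_path /= ?uv ?eqxx //
  passage_time_cons passage_time_nil addr0.
Qed.

Lemma reach_le u v c c' : c <= c' -> reach u v c -> reach u v c'.
Proof. by move=> cc' [s us sc]; exists s => //; apply: le_trans cc'. Qed.

Lemma reach_trans u v z c1 c2 : reach u v c1 -> reach v z c2 -> reach u z (c1 + c2).
Proof.
move=> [s1 /andP[p1 /eqP l1] h1] [s2 /andP[p2 /eqP l2] h2].
exists (s1 ++ s2); first by rewrite /nn_path cat_path p1 l1 p2 last_cat l1 l2 /=.
by rewrite passage_time_cat l1 lerD.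
Qed.

Lemma reach_sym u v c : reach u v c -> reach v u c.
Proof.
move=> [s /andP[p /eqP <-]] sc; apply: reach_le sc _.
elim: s u p => [|z s IH] u; first by rewrite passage_time_nil => _; apply: reach_refl.
move=> /= /andP[uv p]; rewrite passage_time_cons addrC (edge_weightC uv).
by apply: reach_trans (IH _ p) (reach_edge _); rewrite adjC.
Qed.

Lemma reach_up (x y : int) (k : nat) : reach (x, y) (x, y + k%:Z) k%:R.
Proof.
elim: k => [|k IH]; first by rewrite addr0; apply: reach_refl.
rewrite -addn1 natrD; apply: reach_trans IH (reach_le _ (reach_edge _)).
  by rewrite /edge_weight /= eqxx.
by rewrite /adj /= eqxx /=; apply/orP; left; apply/eqP; lia.
Qed.

Lemma reach_vertical (x y y' : int) : reach (x, y) (x, y') (`|y' - y|%N)%:R.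
Proof.
case: (lerP y y') => yy'.
  by have := reach_up x y `|y' - y|%N; congr (reach _ (_, _) _); lia.
apply: reach_sym.
by have := reach_up x y' `|y' - y|%N; congr (reach _ (_, _) _); lia.
Qed.

Lemma reach_right (x y : int) (a : R) (k : nat) :
  (forall i : nat, (i < k)%N -> w (x + i%:Z, y) <= a) ->
  reach (x, y) (x + k%:Z, y) (k%:R * a).
Proof.
elim: k => [|k IH] wa; first by rewrite addr0 mul0r; apply: reach_refl.
rewrite -addn1 natrD mulrDl mul1r.
apply: reach_trans (IH (fun i ik => wa i (ltnW ik))) (reach_le _ (reach_edge _)).
  rewrite /edge_weight /= ifF; last by apply/eqP; lia.
  by rewrite (_ : Order.min _ _ = x + k%:Z) ?wa //; apply/min_idPl; lia.
by rewrite /adj /= eqxx /=; apply/orP; right; apply/eqP; lia.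
Qed.

Lemma reach_horizontal (x x' y : int) (a : R) :
  (forall i : nat, (i < `|x' - x|)%N -> w (Order.min x x' + i%:Z, y) <= a) ->
  reach (x, y) (x', y) ((`|x' - x|%N)%:R * a).
Proof.
case: (lerP x x') => xx' /reach_right; first by congr (reach _ (_, _) _); lia.
by move/reach_sym; congr (reach (_, _) _ _); lia.
Qed.

(* [fpp_time] is an [inf], which is [0] when no lower bound exists: hence [0 <= c]. *)
Lemma fpp_time_le_reach u v c : reach u v c -> 0 <= c -> fpp_time w u v <= c.
Proof.
move=> [s us sc] c0; rewrite /fpp_time.
set S := [set passage_time w u s | s in [set s | nn_path u v s]].
have [lb|nolb] := pselect (has_lbound S).
  by apply: le_trans sc; apply: ge_inf => //; exists s.
by rewrite inf_out //; case.
Qed.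

Definition good_row (x0 : int) (n : nat) (a : R) (y : int) : bool :=
  [forall i : 'I_n, w (x0 + i%:Z, y) <= a].

Lemma fpp_time_detour (x1 x2 y1 y2 : int) (a : R) (k : nat) : 0 <= a ->
  good_row (Order.min x1 x2) `|x2 - x1| a (y1 + k%:Z) ->
  fpp_time w (x1, y1) (x2, y2) <=
    2 * k%:R + (`|y2 - y1|%N)%:R + (`|x2 - x1|%N)%:R * a.
Proof.
move=> a0 /forallP good.
have across := reach_horizontal (fun i lt => good (Ordinal lt)).
apply: fpp_time_le_reach; last by rewrite !addr_ge0 ?mulr_ge0.
apply: reach_le (reach_trans (reach_up x1 y1 k)
                  (reach_trans across (reach_vertical x2 _ y2))).
have : (`|y2 - (y1 + k%:Z)%R|%N)%:R <= k%:R + (`|y2 - y1|%N)%:R :> R.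
  by rewrite -natrD ler_nat; lia.
lra.
Qed.

Lemma expR_fpp_time_le (x1 x2 y1 y2 : int) (a : R) : 0 <= a ->
  exists2 j : nat,
    (forall k, (k < j)%N -> ~~ good_row (Order.min x1 x2) `|x2 - x1| a (y1 + k%:Z)) &
    expR (ln 2 / 2 * fpp_time w (x1, y1) (x2, y2)) <=
    expR (ln 2 / 2 * ((`|y2 - y1|%N)%:R + (`|x2 - x1|%N)%:R * a)) * 2 ^+ j.
Proof.
move=> a0; set T := fpp_time _ _ _.
set C := expR (ln 2 / 2 * ((`|y2 - y1|%N)%:R + (`|x2 - x1|%N)%:R * a)).
set good := fun k : nat => good_row (Order.min x1 x2) `|x2 - x1| a (y1 + k%:Z).
have theta0 : 0 <= ln 2 / 2 :> R by rewrite divr_ge0 // ln_ge0 // ler1n.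
have C1 : 1 <= C.
  rewrite /C -{1}expR0 ler_expR; apply: mulr_ge0 => //.
  by apply: addr_ge0 => //; apply: mulr_ge0.
have [[k0 good_k0]|no_good] := pselect (exists k, good k).
  case: (ex_minnP (ex_intro good k0 good_k0)) => j good_j minj.
  exists j; first by move=> k kj; apply/negP => /minj; rewrite leqNgt kj.
  have -> : 2 ^+ j = expR (j%:R * ln 2) :> R by rewrite expRM_natl lnK ?posrE.
  rewrite /C -expRD ler_expR.
  have := fpp_time_detour y2 a0 good_j; rewrite -/T => Tj.
  have -> : ln 2 / 2 * ((`|y2 - y1|%N)%:R + (`|x2 - x1|%N)%:R * a) + j%:R * ln 2 =
      ln 2 / 2 * (2 * j%:R + (`|y2 - y1|%N)%:R + (`|x2 - x1|%N)%:R * a) :> R.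
    by field.
  exact: ler_wpM2l.
exists (Num.bound (expR (ln 2 / 2 * T))).
  by move=> k _; apply/negP => good_k; apply: no_good; exists k.
rewrite -[X in X <= _]mul1r ler_pM ?expR_ge0 //.
apply: le_trans (ltW (archi_boundP (expR_ge0 _))) _.
by rewrite -natrX ler_nat ltnW // ltn_expl.
Qed.

End Paths.

Section Tail.
Variables (R : realType) (G : probability R R).

Definition tail (a : R) : R := fine (G `]a, +oo[%classic).

Lemma tail_ge0 a : 0 <= tail a.
Proof. by rewrite fine_ge0 // measure_ge0. Qed.

(* [G] is the law of the identity random variable, to which [ccdf] applies. *)
Let idR : R -> R := idfun.
HB.instance Definition _ :=
  @isMeasurableFun.Build _ _ _ _ idR (@measurable_id _ _ setT).

Lemma tail_le (eps : R) : 0 < eps -> exists2 a : R, 0 <= a & tail a <= eps.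
Proof.
rewrite -lte_fin => eps0.
have tail_lt : \forall r \near +oo, (G `]r, +oo[%classic < eps%:E)%E.
  exact: cvg_ccdfy0 (idR : {RV G >-> R}) _ (open_ereal_lt' eps0).
near +oo_R => a; exists a; first by near: a; exact: nbhs_pinfty_ge (@real0 _).
rewrite -lee_fin fineK ?fin_num_measure //; apply: ltW; near: a.
Unshelve. all: by end_near.
Qed.

Lemma tail_row_le (n : nat) : exists2 a : R, 0 <= a & n%:R * tail a <= 4^-1.
Proof.
have eps0 : 0 < (4 * n.+1%:R)^-1 :> R by rewrite invr_gt0 mulr_gt0.
have [a a0 ta] := tail_le eps0; exists a => //.
apply: (@le_trans _ _ (n.+1%:R * tail a)).
  by rewrite ler_wpM2r ?tail_ge0 ?ler_nat.
apply: le_trans (ler_wpM2l (ler0n _ _) ta) _.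
by rewrite le_eqVlt; apply/predU1l; field; rewrite addrC natr1 pnatr_eq0.
Qed.

End Tail.

(* Unlike [ge0_le_integral], this needs no measurability, which is never
   established for the passage time. *)
Lemma ge0_le_integralT d (T : measurableType d) (R : realType)
    (mu : {measure set T -> \bar R}) (f g : T -> \bar R) :
  (forall x, (0 <= f x)%E) -> (forall x, (f x <= g x)%E) ->
  (\int[mu]_(x in setT) f x <= \int[mu]_(x in setT) g x)%E.
Proof.
move=> f0 fg; have g0 x : (0 <= g x)%E by apply: le_trans (fg x).
rewrite (ge0_integralTE _ f0) (ge0_integralTE _ g0).
apply: ge_ereal_sup => _ [h /= hf <-]; apply: ereal_sup_ubound; exists h => //= x.
exact: le_trans (fg x).
Qed.

Lemma integral_le_nneseries_indic d (T : measurableType d) (R : realType)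
    (mu : {measure set T -> \bar R}) (f : T -> R) (c : nat -> R) (B : nat -> set T) :
  (forall x, 0 <= f x) -> (forall j, 0 <= c j) -> (forall j, measurable (B j)) ->
  (forall x, exists2 j, B j x & f x <= c j) ->
  (\int[mu]_(x in setT) (f x)%:E <= \sum_(j <oo) ((c j)%:E * mu (B j)))%E.
Proof.
move=> f0 c0 mB cover.
pose g j : T -> \bar R := fun x => ((c j)%:E * (\1_(B j) x)%:E)%E.
have g0 j x : (0 <= g j x)%E by rewrite mule_ge0 // lee_fin.
have mg j : measurable_fun setT (g j).
  by apply/measurable_funeM/measurable_EFinP; exact: measurable_indic.
have fg x : ((f x)%:E <= \sum_(j <oo) g j x)%E.
  have [j Bj fc] := cover x.
  apply: le_trans (nneseries_lim_ge j.+1 (fun k _ _ => g0 k x)).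
  rewrite big_nat_recr //= -[X in (X <= _)%E]add0e.
  apply: leeD; first by apply: sume_ge0 => k _; exact: g0.
  by rewrite /g indicE mem_set // mule1 lee_fin.
apply: le_trans (ge0_le_integralT _ _ fg) _ => [x|]; first by rewrite lee_fin.
rewrite integral_nneseries //; apply: lee_nneseries => [j _ _|j _].
  by apply: integral_ge0 => x _; exact: g0.
rewrite ge0_integralZl_EFin // ?integral_indic ?setIT //.
by apply/measurable_EFinP; exact: measurable_indic.
Qed.

Lemma nneseries_pow2_le (R : realType) (C : R) (p : nat -> \bar R) : 0 <= C ->
  (forall j, 0 <= p j)%E -> (forall j, p j <= ((4^-1) ^+ j)%:E)%E ->
  (\sum_(j <oo) ((C * 2 ^+ j)%:E * p j) <= (2 * C)%:E)%E.
Proof.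
move=> C0 p0 p4.
have C2j j : 0 <= C * 2 ^+ j by rewrite mulr_ge0 ?exprn_ge0.
have <- : (\sum_(j <oo) ((2 * C) / (2 ^ (j + 1))%:R)%:E)%E = (2 * C)%:E.
  have := @cvg_geometric_eseries_half _ (2 * C) 0.
  by rewrite expr0 divr1 => /cvg_lim <-.
apply: lee_nneseries => [j _ _|j _]; first by rewrite mule_ge0 // lee_fin.
apply: le_trans (lee_wpmul2l _ (p4 j)) _; first by rewrite lee_fin.
rewrite -EFinM lee_fin.
suff -> : C * 2 ^+ j * (4^-1) ^+ j = 2 * C / (2 ^ (j + 1))%:R by [].
have -> : 4 = 2 * 2 :> R by ring.
by rewrite natrX addn1 exprSr exprVn exprMn; field; rewrite expf_neq0.
Qed.

Section RowEvents.
Variables (R : realType) (G : probability R R) (d : measure_display)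
  (Omega : measurableType d) (P : probability Omega R) (w : vertex -> Omega -> R).
Hypothesis mw : forall e, measurable_fun setT (w e).
Hypothesis law : forall e (A : set R), measurable A -> P (w e @^-1` A) = G A.
Hypothesis indep : mutually_independent P w.
Variables (x0 : int) (n : nat) (a : R).
Local Notation t := (tail G a).

Definition exceed (e : vertex) : set Omega := w e @^-1` `]a, +oo[%classic.

Definition bad_row (y : int) : set Omega :=
  \big[setU/set0]_(i < n) exceed (x0 + i%:Z, y).

Lemma measurable_exceed e : measurable (exceed e).
Proof. by have := mw e measurableT (measurable_itv `]a, +oo[); rewrite setTI. Qed.

Lemma measurable_bad_row y : measurable (bad_row y).
Proof. by apply: bigsetU_measurable => i _; exact: measurable_exceed. Qed.

Lemma P_exceed e : P (exceed e) = t%:E.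
Proof.
have mI : measurable (`]a, +oo[%classic : set R) by exact: measurable_itv.
by rewrite /exceed law // fineK // fin_num_measure.
Qed.

Lemma bad_rowP y om : bad_row y om <-> ~~ good_row (w^~ om) x0 n a y.
Proof.
rewrite /bad_row -(bigcup_mkord n (fun k => exceed (x0 + k%:Z, y))) negb_forall.
split => [[i /= lt_in]|/existsP[i]].
  rewrite /exceed /= in_itv /= andbT => wa.
  by apply/existsP; exists (Ordinal lt_in); rewrite -ltNge.
by rewrite -ltNge => wa; exists i => //=; rewrite /exceed /= in_itv /= andbT.
Qed.

Lemma P_bigsetI_exceed (E : seq vertex) : uniq E ->
  P (\big[setI/setT]_(e <- E) exceed e) = (t ^+ size E)%:E.
Proof.
move=> uE; rewrite (@indep E (fun=> `]a, +oo[%classic) uE) => [|_]; last first.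
  exact: measurable_itv.
elim: E {uE} => [|e E IH]; first by rewrite big_nil.
by rewrite big_cons IH -/(exceed e) P_exceed exprS EFinM.
Qed.

Definition cylinder (E : seq vertex) (ks : seq int) : set Omega :=
  \big[setI/setT]_(e <- E) exceed e `&` \big[setI/setT]_(y <- ks) bad_row y.

Lemma measurable_cylinder E ks : measurable (cylinder E ks).
Proof.
by apply: measurableI; apply: bigsetI_measurable => i _;
  [exact: measurable_exceed|exact: measurable_bad_row].
Qed.

Lemma P_cylinder_le (ks : seq int) (E : seq vertex) :
  uniq ks -> uniq E -> (forall e, e \in E -> e.2 \notin ks) ->
  (P (cylinder E ks) <= ((t ^+ size E) * (n%:R * t) ^+ size ks)%:E)%E.
Proof.
elim: ks E => [|y ks IH] E uks uE Eks.
  by rewrite /cylinder big_nil setIT P_bigsetI_exceed // expr0 mulr1.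
move: uks => /= /andP[yks uks].
(* Union bound over the edge of row [y] exceeding [a]: that edge joins the
   cylinder [E], whose rows stay outside [ks], so its edges remain distinct. *)
pose F (k : nat) := cylinder ((x0 + k%:Z, y) :: E) ks.
have PF k : (P (F k) <= ((t ^+ (size E).+1) * (n%:R * t) ^+ size ks)%:E)%E.
  apply: IH => //=; first by rewrite uE andbT; apply/negP => /Eks; rewrite inE eqxx.
  by move=> e; rewrite inE => /orP[/eqP -> //|/Eks]; rewrite inE negb_or => /andP[].
have cover : cylinder E (y :: ks) `<=` \big[setU/set0]_(k < n) F k.
  rewrite -bigcup_mkord /cylinder big_cons => om [Eom [+ ksom]].
  rewrite /bad_row -(bigcup_mkord n (fun k => exceed (x0 + k%:Z, y))) => -[k kn yom].
  by exists k => //; rewrite /F /cylinder big_cons.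
apply: le_trans (@content_subadditive _ _ _ P _ F n
  (fun k _ => measurable_cylinder _ _) (measurable_cylinder _ _) cover) _.
apply: (@le_trans _ _ (\sum_(k < n) (t ^+ (size E).+1 * (n%:R * t) ^+ size ks)%:E)%E).
  by apply: lee_sum => k _; exact: PF.
rewrite sumEFin sumr_const card_ord lee_fin !exprS -mulr_natr le_eqVlt.
by apply/predU1l; ring.
Qed.

Lemma P_bad_rows_le (ks : seq int) : uniq ks ->
  (P (\big[setI/setT]_(y <- ks) bad_row y) <= ((n%:R * t) ^+ size ks)%:E)%E.
Proof.
move=> uks; have := P_cylinder_le (E := [::]) uks.
by rewrite /cylinder big_nil setTI expr0 mul1r; apply.
Qed.

End RowEvents.

Unset Implicit Arguments.

Theorem corollary3p3 (R : realType) (G : probability R R) :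
  G [set x : R | 0 <= x] = 1%E ->
  exists theta : R, 0 < theta /\
    forall (d : measure_display) (Omega : measurableType d)
           (P : probability Omega R) (w : vertex -> Omega -> R),
      (forall e, measurable_fun setT (w e)) ->
      (forall e (A : set R), measurable A -> P (w e @^-1` A) = G A) ->
      mutually_independent P w ->
      forall x1 x2 y1 y2 : int,
        (\int[P]_(om in setT)
           (expR (theta * fpp_time (fun e => w e om) (x1, y1) (x2, y2)))%:E
         < +oo)%E.
Proof.
move=> _; exists (ln 2 / 2); split; first by rewrite divr_gt0 // ln_gt0 // ltr1n.
move=> d Omega P w mw law indep x1 x2 y1 y2.
set n := `|x2 - x1|%N; set x0 := Order.min x1 x2.
have [a a0 quarter] := tail_row_le G n.
pose rows j := [seq y1 + k%:Z | k <- iota 0 j].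
pose B j := \big[setI/setT]_(y <- rows j) bad_row w x0 n a y.
apply: le_lt_trans (integral_le_nneseries_indic P (c := fun j =>
  expR (ln 2 / 2 * ((`|y2 - y1|%N)%:R + n%:R * a)) * 2 ^+ j) (B := B) _ _ _ _) _.
- by move=> om; rewrite expR_ge0.
- by move=> j; rewrite mulr_ge0 ?expR_ge0 ?exprn_ge0.
- by move=> j; apply: bigsetI_measurable => y _; exact: measurable_bad_row.
- move=> om; have [j bad fpp_j] := expR_fpp_time_le (w^~ om) x1 x2 y1 y2 a0.
  exists j => //; rewrite /B -bigcap_seq => y /mapP[k].
  by rewrite mem_iota => /andP[_ kj] ->; exact/bad_rowP/bad.
apply: le_lt_trans (nneseries_pow2_le _ _ _) (ltry _) => [|j|j].
- exact: expR_ge0.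
- exact: measure_ge0.
have uniq_rows : uniq (rows j) by rewrite map_inj_uniq ?iota_uniq // => p q /addrI [].
apply: le_trans (P_bad_rows_le mw law indep x0 n a uniq_rows) _.
by rewrite size_map size_iota lee_fin lerXn2r // nnegrE ?invr_ge0 ?mulr_ge0 ?tail_ge0.
Qed.
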